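(* Let $N\ge 2$, $m\ge N$, $\theta>0$, and let $\rho_\kappa=\Upsilon(\kappa,\gamma_r,m)$, $\kappa=1,\dots,m$, be request probabilities (nonnegative, summing to $1$) given by a popularity distribution $\Upsilon$ with skew exponent $\gamma_r$. With the caching/request model, operating modes, mode probabilities $\mathcal{P}_\Delta$, transmission probability $\mathcal{P}_{\textup{TX}}$ and interference model described in the context, the success probability of an arbitrary node satisfies \[ \textup{P}_{\rm s}(N,\gamma_r,\theta)=\frac{1}{N}\mathcal{P}_{\textup{hit}}+\sum_{n_t=1}^{N}\left(\mathcal{P}_{\textup{HDRX}}\,\mathcal{L}_{\mathcal{I},\textup{HDRX}}(\theta;n_t)+\mathcal{P}_{\textup{FDTR}}\,\mathcal{L}_{\mathcal{I},\textup{FDTR}}(\theta;n_t)\right)\binom{N}{n_t}\mathcal{P}_{\textup{TX}}^{\,n_t}\left(1-\mathcal{P}_{\textup{TX}}\right)^{N-n_t}, \] where $\mathcal{P}_{\textup{hit}}=\sum_{\kappa=1}^N\rho_\kappa$.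
   Context: Caching/request model: users $u_1,\dots,u_N$; $u_\kappa$ caches only content $c_\kappa$ of a library $c_1,\dots,c_m$; each user $u_\mu$ independently requests one content $R_\mu$ with $\Pr(R_\mu=c_\ell)=\rho_\ell$; $K$ is uniform on $\{1,\dots,N\}$ independent of requests. Let $S_\kappa$ be the event that some $u_\mu$, $\mu\ne\kappa$, requests $c_\kappa$. Modes of $u_\kappa$: SR: $R_\kappa=c_\kappa$ and not $S_\kappa$; SR-HDTX: $R_\kappa=c_\kappa$ and $S_\kappa$; FDTR: $R_\kappa=c_\mu$ for some $\mu\ne\kappa$, $\mu\le N$, and $S_\kappa$; HDRX: $R_\kappa=c_\mu$ for some $\mu\ne\kappa$, $\mu\le N$, and not $S_\kappa$; HDTX: $R_\kappa\notin\{c_1,\dots,c_N\}$ and $S_\kappa$. $\mathcal{P}_\Delta$ is the probability that $u_K$ is in mode $\Delta$, and $\mathcal{P}_{\textup{TX}}=\mathcal{P}_{\textup{SR-HDTX}}+\mathcal{P}_{\textup{HDTX}}+\mathcal{P}_{\textup{FDTR}}$. Interference model: fix $\mathcal{R}>0$, $\alpha>2$, $\beta\in[0,1]$. For an integer $n_t\ge1$ and $\delta\in\{\textup{HDRX},\textup{FDTR}\}$, let $\mathbf{x}_0,\mathbf{y}_0,\mathbf{y}_1,\dots,\mathbf{y}_{n_t-1},\mathbf{x}_1,\dots,\mathbf{x}_{n_t-1}$ be independent uniform points in the disk of radius $\mathcal{R}$ centered at the origin, $h_0,h_1,\dots,h_{n_t-1}$ i.i.d. exponential with mean $1$ independent of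 the points, $Z_0=\|\mathbf{y}_0-\mathbf{x}_0\|$, $Z_i=\|\mathbf{y}_i-\mathbf{x}_i\|$, $W_i=\|\mathbf{y}_i-\mathbf{x}_0\|$, $\mathbbm{1}_\delta=1$ for FDTR and $0$ for HDRX, $\mathcal{I}_\delta=\sum_{i=1}^{n_t-1}(h_iZ_i^\alpha W_i^{-\alpha}+\mathbbm{1}_\delta\beta Z_0^\alpha)$, $\mathtt{SIR}_\delta=h_0/\mathcal{I}_\delta$, and $\mathcal{L}_{\mathcal{I},\delta}(s;n_t)=\mathbb{E}[e^{-s\mathcal{I}_\delta}]$. The number of concurrent transmitters $N_t$ is modeled as Binomial$(N,\mathcal{P}_{\textup{TX}})$. Success probability: $\textup{P}_{\rm s}(N,\gamma_r,\theta)$ is the probability that the arbitrary node $u_K$ either finds its desired content in its own cache (modes SR or SR-HDTX) or is a receiver in mode $\delta\in\{\textup{HDRX},\textup{FDTR}\}$ whose $\mathtt{SIR}_\delta$ (with $n_t=N_t$ transmitters, averaged over $N_t\in\{1,\dots,N\}$ with the binomial weights, the mode being independent of the $\mathtt{SIR}$) is at least $\theta$; i.e. $\textup{P}_{\rm s}=\mathcal{P}_{\textup{SR}}+\mathcal{P}_{\textup{SR-HDTX}}+\sum_{n_t=1}^N\binom{N}{n_t}\mathcal{P}_{\textup{TX}}^{n_t}(1-\mathcal{P}_{\textup{TX}})^{N-n_t}\sum_{\delta}\mathcal{P}_\delta\Pr(\mathtt{SIR}_\delta\ge\theta\mid N_t=n_t)$. *)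

From HB Require Import structures.
From mathcomp Require Import all_boot all_order all_algebra.
From mathcomp Require Import all_classical all_reals all_analysis.
Set Implicit Arguments. Unset Strict Implicit. Unset Printing Implicit Defensive.
Import Order.TTheory GRing.Theory Num.Theory.
Import numFieldNormedType.Exports.
Local Open Scope classical_set_scope.
Local Open Scope ring_scope.

(* Users u_1..u_N are indexed by k : 'I_N (u_{k+1}), contents c_1..c_m by
   l : 'I_m (c_{l+1}).  User u_{k+1} caches c_{k+1}.  A request profile is
   r : {ffun 'I_N -> 'I_m}, r mu being the (index of the) content requested
   by user mu. *)

Section Modes.
Variables (N m : nat).
Implicit Types (k : 'I_N) (r : {ffun 'I_N -> 'I_m}).

Definition S_ev k r : bool := [exists mu : 'I_N, (mu != k) && (val (r mu) == val k)].

Definition mode_SR k r : bool := (val (r k) == val k) && ~~ S_ev k r.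
Definition mode_SR_HDTX k r : bool := (val (r k) == val k) && S_ev k r.
Definition req_other k r : bool :=
  [exists mu : 'I_N, (mu != k) && (val (r k) == val mu)].
Definition mode_FDTR k r : bool := req_other k r && S_ev k r.
Definition mode_HDRX k r : bool := req_other k r && ~~ S_ev k r.
Definition mode_HDTX k r : bool := (N <= val (r k))%N && S_ev k r.
End Modes.

Section ModeProb.
Variables (R : realType) (N m : nat) (rho : 'I_m -> R).

(* Pr(u_K is in the mode described by pred), with K uniform on 'I_N and
   the requests R_mu i.i.d. with Pr(R_mu = c_l) = rho l. *)
Definition mode_prob (pred : 'I_N -> {ffun 'I_N -> 'I_m} -> bool) : R :=
  \sum_(k : 'I_N) \sum_(r : {ffun 'I_N -> 'I_m})
     (N%:R)^-1 * (\prod_(mu : 'I_N) rho (r mu)) * (pred k r)%:R.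

Definition P_SR := mode_prob (@mode_SR N m).
Definition P_SR_HDTX := mode_prob (@mode_SR_HDTX N m).
Definition P_FDTR := mode_prob (@mode_FDTR N m).
Definition P_HDRX := mode_prob (@mode_HDRX N m).
Definition P_HDTX := mode_prob (@mode_HDTX N m).
Definition P_TX := P_SR_HDTX + P_HDTX + P_FDTR.

Definition P_hit : R := \sum_(l < m | (val l < N)%N) rho l.

Definition binom_w (nt : nat) : R :=
  'C(N, nt)%:R * P_TX ^+ nt * (1 - P_TX) ^+ (N - nt).
End ModeProb.

Section Geometry.
Variable R : realType.

Definition dist2 (p q : R * R) : R :=
  Num.sqrt ((p.1 - q.1) ^+ 2 + (p.2 - q.2) ^+ 2).

Definition disk (Rd : R) : set (R * R) :=
  [set p | p.1 ^+ 2 + p.2 ^+ 2 <= Rd ^+ 2].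

Definition leb2 := ((@lebesgue_measure R) \x (@lebesgue_measure R))%E.
End Geometry.

Section Interference.
Variables (R : realType) (d : measure_display) (T : measurableType d)
  (P : probability T R).

Definition uniform_disk (Rd : R) (X : T -> R * R) : Prop :=
  forall A : set (R * R), measurable A ->
    P (X @^-1` A) = (@leb2 R (A `&` disk Rd) * ((pi * Rd ^+ 2)^-1)%:E)%E.

Definition exp_mean1 (H : T -> R) : Prop :=
  forall C : set R, measurable C ->
    P (H @^-1` C) =
      (\int[@lebesgue_measure R]_(t in C `&` `[0%R, +oo[%classic) (expR (- t))%:E)%E.

(* mutual independence of the family {x_i, y_i, h_i : i in nat}:
   product rule for every finite initial segment and every choice of
   measurable sets (choosing whole spaces gives every finite subfamily). *)
Definition indep_family (x y : nat -> T -> R * R) (h : nat -> T -> R) : Prop :=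
  forall (n : nat) (A B : nat -> set (R * R)) (C : nat -> set R),
    (forall i, measurable (A i) /\ measurable (B i) /\ measurable (C i)) ->
    P (\bigcap_(i in `I_n) (x i @^-1` A i `&` y i @^-1` B i `&` h i @^-1` C i)) =
    (\prod_(i < n) (P (x i @^-1` A i) * P (y i @^-1` B i) * P (h i @^-1` C i)))%E.

Variables (x y : nat -> T -> R * R) (h : nat -> T -> R).

Definition Zd (i : nat) (w : T) : R := dist2 (y i w) (x i w).
Definition Wd (i : nat) (w : T) : R := dist2 (y i w) (x 0%N w).

(* I_delta with nt transmitters; fd = true for FDTR, false for HDRX *)
Definition interf (alpha beta : R) (fd : bool) (nt : nat) (w : T) : R :=
  \sum_(1 <= i < nt)
     (h i w * Zd i w `^ alpha * Wd i w `^ (- alpha)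
      + (fd%:R) * beta * Zd 0 w `^ alpha).

(* SIR_delta = h_0 / I_delta, with the convention h_0/0 = +oo *)
Definition SIR (alpha beta : R) (fd : bool) (nt : nat) (w : T) : \bar R :=
  let I := interf alpha beta fd nt w in
  if I == 0 then +oo%E else (h 0%N w / I)%:E.

Definition laplace_I (alpha beta : R) (fd : bool) (s : R) (nt : nat) : \bar R :=
  (\int[P]_w (expR (- (s * interf alpha beta fd nt w)))%:E)%E.

(* Pr(SIR_delta >= theta | N_t = nt) *)
Definition cover_prob (alpha beta : R) (fd : bool) (theta : R) (nt : nat) : \bar R :=
  P [set w | (theta%:E <= SIR alpha beta fd nt w)%E].
End Interference.

Definition success_prob (R : realType) (d : measure_display) (T : measurableType d)
  (P : probability T R) (x y : nat -> T -> R * R) (h : nat -> T -> R)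
  (alpha beta : R) (N m : nat) (rho : 'I_m -> R) (theta : R) : \bar R :=
  ((P_SR N rho + P_SR_HDTX N rho)%:E +
   \sum_(1 <= nt < N.+1)
     ((binom_w N rho nt)%:E *
      ((P_HDRX N rho)%:E * cover_prob P x y h alpha beta false theta nt +
       (P_FDTR N rho)%:E * cover_prob P x y h alpha beta true theta nt)))%E.

From HB Require Import structures.
From mathcomp Require Import all_boot all_order all_algebra.
From mathcomp Require Import all_classical all_reals all_analysis.
From mathcomp Require Import measurable_realfun exponential_distribution.
Set Implicit Arguments. Unset Strict Implicit. Unset Printing Implicit Defensive.
Import Order.TTheory GRing.Theory Num.Theory.
Import numFieldNormedType.Exports.
Local Open Scope classical_set_scope.
Local Open Scope ring_scope.

(* A node finds its content in its own cache exactly when R_K = c_K (modes SR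
   and SR-HDTX together); under the product law of the requests this has
   probability rho_K, and averaging over the uniform K gives P_hit / N.
   For a receiver, the interference I is built from marks other than h_0: it
   is measurable for the sigma-algebra generated by the cylinder events not
   involving h_0, on which the product rule makes h_0 independent, and the
   pi-lambda theorem extends this independence to I.  Fubini for the
   independent pair (I, h_0) and I >= 0 a.s. then give
   P(h_0 >= theta I) = E[P(h_0 >= theta t)|_{t = I}] = E[exp(-theta I)]. *)

Lemma sum_ffun_prod_marginal {R : comPzSemiRingType} {I J : finType}
    (rho f : J -> R) (k : I) :
  \sum_j rho j = 1 ->
  \sum_(r : {ffun I -> J}) (\prod_i rho (r i)) * f (r k) = \sum_j rho j * f j.
Proof.
move=> rho1.
pose F i j := rho j * (if i == k then f j else 1).
transitivity (\sum_(r : {ffun I -> J}) \prod_i F i (r i)).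
  apply: eq_bigr => r _; rewrite /F big_split /= [X in _ = _ * X](bigD1 k) //= eqxx.
  by rewrite [X in _ = _ * (_ * X)]big1 ?mulr1 // => i /negbTE ->.
rewrite -bigA_distr_bigA (bigD1 k) //= [X in _ * X]big1 ?mulr1.
  by apply: eq_bigr => j _; rewrite /F eqxx.
by move=> i /negbTE ik; under eq_bigr do rewrite /F ik mulr1.
Qed.

Lemma mode_SR_add_SR_HDTX (R : pzSemiRingType) N m (k : 'I_N) (r : {ffun 'I_N -> 'I_m}) :
  (mode_SR k r)%:R + (mode_SR_HDTX k r)%:R = (val (r k) == val k)%:R :> R.
Proof.
by rewrite /mode_SR /mode_SR_HDTX; case: eqP; case: S_ev; rewrite ?addr0 ?add0r.
Qed.

Lemma P_hitE (R : realType) N m (rho : 'I_m -> R) :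
  P_hit N rho = \sum_(k : 'I_N) \sum_l rho l * (val l == val k)%:R.
Proof.
rewrite exchange_big /P_hit big_mkcond /=; apply: eq_bigr => l _.
rewrite -big_distrr /=; case: ltnP => [lN | Nl].
  rewrite (bigD1 (Ordinal lN)) //= eqxx big1 ?addr0 ?mulr1 // => k kl.
  by case: eqP => // lk; case/eqP: kl; apply: val_inj.
rewrite [X in _ * X]big1 ?mulr0 // => k _.
by case: eqP => // lk; move: Nl; rewrite lk leqNgt ltn_ord.
Qed.

Lemma P_SR_add_SR_HDTX (R : realType) N m (rho : 'I_m -> R) :
  \sum_l rho l = 1 -> P_SR N rho + P_SR_HDTX N rho = N%:R^-1 * P_hit N rho.
Proof.
move=> rho1; rewrite /P_SR /P_SR_HDTX /mode_prob -big_split P_hitE mulr_sumr.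
apply: eq_bigr => k _.
rewrite -big_split -(sum_ffun_prod_marginal (fun l => (val l == val k)%:R) k rho1).
rewrite mulr_sumr.
by apply: eq_bigr => r _; rewrite /= -!mulrA -!mulrDr mode_SR_add_SR_HDTX.
Qed.

Lemma measurable_preimageT d d' (aT : measurableType d) (rT : measurableType d')
    (f : aT -> rT) (B : set rT) :
  measurable_fun setT f -> measurable B -> measurable (f @^-1` B).
Proof. by move=> mf mB; rewrite -[_ @^-1` _]setTI; exact: mf. Qed.

Lemma measurable_sum_nat (R : realType) d (T : measurableType d) (D : set T) m n
    (F : nat -> T -> R) :
  (forall i, (m <= i < n)%N -> measurable_fun D (F i)) ->
  measurable_fun D (fun w => \sum_(m <= i < n) F i w).
Proof.
move=> mF; pose G i := if (m <= i < n)%N then F i else cst 0.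
have -> : (fun w => \sum_(m <= i < n) F i w) = (fun w => \sum_(m <= i < n) G i w).
  by apply/funext => w; apply: eq_big_nat => i imn; rewrite /G imn.
by apply: measurable_sum => i; rewrite /G; case: ifPn => [/mF|_] //; exact: measurable_cst.
Qed.

Lemma integral_expRN_itvcy (R : realType) (c : R) : 0 <= c ->
  (\int[@lebesgue_measure R]_(t in `[c, +oo[) (expR (- t))%:E = (expR (- c))%:E)%E.
Proof.
move=> c0.
have cge0 t : c <= t -> 0 <= t by exact: le_trans.
transitivity (\int[@lebesgue_measure R]_(t in `[c, +oo[) (exponential_pdf 1 t)%:E)%E.
  apply: eq_integral => t; rewrite inE /= in_itv /= andbT => ct.
  by rewrite exponential_pdfE ?mul1r ?mulN1r // cge0.
have cE : continuous (fun z : R => expR (- 1 * z)).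
  move=> z; apply: continuous_comp; last exact: continuous_expR.
  by apply: continuousM => //; apply: (@continuousN _ R^o); exact: cst_continuous.
rewrite (@ge0_continuous_FTC2y _ (exponential_pdf 1) (fun x => - expR (- 1 * x)) c 0).
- by rewrite mulN1r EFinN sub0e oppeK.
- by move=> t _; exact: exponential_pdf_ge0.
- apply: (@continuous_subspaceW R^o _ _ [set` `[0, +oo[%R]).
    by move=> t /=; rewrite !in_itv /= !andbT; exact: cge0.
  exact: within_continuous_exponential_pdf.
- rewrite -oppr0; apply: cvgN; under eq_fun do rewrite mulN1r.
  exact: cvgr_expR.
- by move=> z _; exact: ex_derive.
- by apply: cvgN; apply/cvg_at_right_filter; exact: cE.
- move=> z; rewrite in_itv /= andbT => cz; apply: derive1_exponential_pdf.
  by rewrite in_itv /= andbT; exact: le_lt_trans c0 cz.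
Qed.

Section exp_mean1.
Context (R : realType) d (T : measurableType d) (P : probability T R) (H : T -> R).
Hypothesis expH : exp_mean1 P H.

Lemma exp_mean1_itvcy (c : R) : 0 <= c ->
  P (H @^-1` `[c, +oo[) = (expR (- c))%:E.
Proof.
move=> c0; rewrite expH; last exact: measurable_itv.
rewrite setIidl; first exact: integral_expRN_itvcy.
by move=> t /=; rewrite !in_itv /= !andbT; exact: le_trans.
Qed.

Lemma exp_mean1_ltr0 : P (H @^-1` `]-oo, 0[) = 0%E.
Proof.
rewrite expH; last exact: measurable_itv.
rewrite (_ : _ `&` _ = set0) ?integral_set0 //.
by rewrite !set_itvE; apply/seteqP; split => t //= [] /lt_le_trans /[apply]; rewrite ltxx.
Qed.

End exp_mean1.

Lemma exp_mean1_ae_ge0 (R : realType) d (T : measurableType d) (P : probability T R)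
    (H : T -> R) :
  measurable_fun setT H -> exp_mean1 P H -> \forall w \ae P, 0 <= H w.
Proof.
move=> mH expH.
have : P.-negligible (H @^-1` `]-oo, 0[).
  by apply/negligibleP; [exact: measurable_preimageT|exact: exp_mean1_ltr0].
by apply: negligibleS => w /=; rewrite in_itv /= ltNge => /negP.
Qed.

Section independence.
Local Open Scope ereal_scope.
Context (R : realType) d (T : measurableType d) (P : probability T R).

Lemma indep_sigma_generated (G : set (set T)) (H : set T) :
  setI_closed G -> G `<=` measurable -> measurable H ->
  (forall E, G E -> P (E `&` H) = P E * P H) ->
  forall E, <<s G >> E -> P (E `&` H) = P E * P H.
Proof.
move=> GI Gm mH GH.
pose D := [set S | measurable S /\ P (S `&` H) = P S * P H].
suff GD : <<s G >> `<=` D by move=> E /GD [].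
apply: (lambda_system_subset GI); last by move=> X _; exact: subsetT.
- apply/dynkin_lambda_system; split.
  + by split => //; rewrite setTI probability_setT mul1e.
  + move=> S [mS SH]; split; first exact: measurableC.
    rewrite probability_setC // setIC -setDE measureD //; last first.
      by rewrite -ge0_fin_numE ?fin_num_measure.
    rewrite muleBl ?fin_num_measure // mul1e; congr (_ - _).
    by rewrite setIC; exact: SH.
  + move=> F tF FD; split; first by apply: bigcupT_measurable => n; case: (FD n).
    have mF n : measurable (F n) by case: (FD n).
    rewrite setI_bigcupl measure_bigcup //; last first.
      apply/trivIsetP => i j _ _ ij; rewrite setIACA setIid.
      by move/trivIsetP: tF => /(_ i j I I ij) ->; rewrite set0I.
      by move=> i _; exact: measurableI.
    rewrite measure_bigcup //.
    transitivity (\sum_(0 <= i <oo | i \in [set: nat]) (fine (P H))%:E * P (F i)).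
      apply: eq_eseriesr => i _; rewrite muleC fineK ?fin_num_measure //.
      exact: (proj2 (FD i)).
    by rewrite nneseriesZl // muleC fineK ?fin_num_measure.
- by move=> E GE; split; [exact: Gm|exact: GH].
Qed.

Lemma prob_preimage_pair_indep d1 d2 (T1 : measurableType d1) (T2 : measurableType d2)
    (X : T -> T1) (Y : T -> T2) :
  measurable_fun setT X -> measurable_fun setT Y ->
  (forall A B, measurable A -> measurable B ->
    P (X @^-1` A `&` Y @^-1` B) = P (X @^-1` A) * P (Y @^-1` B)) ->
  forall S, measurable S ->
    P [set w | S (X w, Y w)] = \int[P]_w P (Y @^-1` xsection S (X w)).
Proof.
move=> mX mY XY S mS.
pose X' : {RV P >-> T1} := HB.pack X (isMeasurableFun.Build _ _ _ _ _ mX).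
pose Y' : {RV P >-> T2} := HB.pack Y (isMeasurableFun.Build _ _ _ _ _ mY).
have mXY := measurable_fun_pair mX mY.
pose XY' : {RV P >-> (T1 * T2)%type} := HB.pack (fun w => (X w, Y w))
  (isMeasurableFun.Build _ _ _ _ _ mXY).
transitivity (distribution P XY' S); first by [].
rewrite -(product_measure_unique (m1 := distribution P X') (m2 := distribution P Y')) //.
by rewrite /product_measure1 /= ge0_integral_distribution //; exact: measurable_fun_xsection.
Qed.

Lemma measurable_prob_preimage_xsection d1 d2 (T1 : measurableType d1)
    (T2 : measurableType d2) (Y : T -> T2) (S : set (T1 * T2)) :
  measurable_fun setT Y -> measurable S ->
  measurable_fun setT (fun a => P (Y @^-1` xsection S a)).
Proof.
move=> mY mS.
pose Y' : {RV P >-> T2} := HB.pack Y (isMeasurableFun.Build _ _ _ _ _ mY).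
exact: (@measurable_fun_xsection _ _ T1 _ _ (distribution P Y') _ mS).
Qed.

End independence.

Section interference_measurable.
Context (R : realType) d (T : measurableType d).

Lemma measurable_dist2 (f g : T -> R * R) :
  measurable_fun setT f -> measurable_fun setT g ->
  measurable_fun setT (fun w => dist2 (f w) (g w)).
Proof.
move=> mf mg; apply: measurableT_comp (continuous_measurable_fun (@sqrt_continuous R)) _.
apply: measurable_funD; apply: measurable_funX; apply: measurable_funB.
- exact: measurableT_comp measurable_fst mf.
- exact: measurableT_comp measurable_fst mg.
- exact: measurableT_comp measurable_snd mf.
- exact: measurableT_comp measurable_snd mg.
Qed.

Lemma measurable_interf (x y : nat -> T -> R * R) (h : nat -> T -> R)
    alpha beta fd nt :
  (forall i, (i < nt)%N -> measurable_fun setT (x i)) ->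
  (forall i, (i < nt)%N -> measurable_fun setT (y i)) ->
  (forall i, (0 < i < nt)%N -> measurable_fun setT (h i)) ->
  measurable_fun setT (interf x y h alpha beta fd nt).
Proof.
move=> mx my mh.
have mZ i : (i < nt)%N -> measurable_fun setT (fun w => Zd x y i w `^ alpha).
  move=> ilt; apply: measurableT_comp (measurable_powR _) _.
  by apply: measurable_dist2; [exact: my|exact: mx].
have mW i : (i < nt)%N -> measurable_fun setT (fun w => Wd x y i w `^ (- alpha)).
  move=> ilt; apply: measurableT_comp (measurable_powR _) _.
  by apply: measurable_dist2; [exact: my|apply: mx; exact: leq_ltn_trans ilt].
apply: measurable_sum_nat => i /andP[i0 ilt].
apply: measurable_funD; first apply: measurable_funM; first apply: measurable_funM.
- by apply: mh; rewrite i0.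
- exact: mZ.
- exact: mW.
- by apply: measurable_funM; [exact: measurable_cst|apply: mZ; exact: leq_ltn_trans ilt].
Qed.

End interference_measurable.

Lemma interf_ge0 (R : realType) d (T : measurableType d) (x y : nat -> T -> R * R)
    (h : nat -> T -> R) alpha beta fd nt w :
  0 <= beta -> (forall i, 0 <= h i w) -> 0 <= interf x y h alpha beta fd nt w.
Proof.
move=> beta0 h0; apply: sumr_ge0 => i _.
by apply: addr_ge0; rewrite !mulr_ge0 ?powR_ge0.
Qed.

Section cylinders.
Context (R : realType) d (T : measurableType d) (P : probability T R)
  (x y : nat -> T -> R * R) (h : nat -> T -> R).
Hypotheses (mx : forall i, measurable_fun setT (x i))
  (my : forall i, measurable_fun setT (y i))
  (mh : forall i, measurable_fun setT (h i))
  (indep : indep_family P x y h).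
Variable nt : nat.
Hypothesis nt_gt0 : (0 < nt)%N.

Definition cylinder (A B : nat -> set (R * R)) (C : nat -> set R) : set T :=
  \bigcap_(i in `I_nt) (x i @^-1` A i `&` y i @^-1` B i `&` h i @^-1` C i).

Definition h0free_cylinders : set (set T) := [set E | exists A B C,
  [/\ forall i, measurable (A i) /\ measurable (B i) /\ measurable (C i),
      C 0%N = setT & E = cylinder A B C]].

Lemma h0free_cylinders_measurable : h0free_cylinders `<=` measurable.
Proof.
move=> _ [A [B [C [mABC _ ->]]]]; apply: bigcap_measurable; first by exists 0%N.
move=> i _; have [mA [mB mC]] := mABC i.
by apply: measurableI; [apply: measurableI|]; apply: measurable_preimageT.
Qed.

Lemma h0free_cylinders_setI_closed : setI_closed h0free_cylinders.
Proof.
move=> _ _ [A [B [C [mABC C0 ->]]]] [A' [B' [C' [mABC' C0' ->]]]].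
exists (fun i => A i `&` A' i), (fun i => B i `&` B' i), (fun i => C i `&` C' i).
split; first 2 last.
- apply/seteqP; split => w /=.
    by move=> [E E'] i /[dup] /E [[? ?] ?] /E' [[? ?] ?].
  by move=> E; split => i /E [[[? ?] [? ?]] [? ?]].
- move=> i; have [? [? ?]] := mABC i; have [? [? ?]] := mABC' i.
  by split; [|split]; apply: measurableI.
- by rewrite C0 C0' setTI.
Qed.

Lemma h0free_cylinder_indep_h0 E C : measurable C -> h0free_cylinders E ->
  P (E `&` h 0 @^-1` C) = (P E * P (h 0 @^-1` C))%E.
Proof.
move=> mC [A [B [Cs [mABC C0 ->]]]].
pose Cs' i := if i == 0%N then C else Cs i.
have mABC' i : measurable (A i) /\ measurable (B i) /\ measurable (Cs' i).
  by have [? [? ?]] := mABC i; rewrite /Cs'; case: eqP.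
have -> : cylinder A B Cs `&` h 0 @^-1` C = cylinder A B Cs'.
  apply/seteqP; split => w /=.
    move=> [cw hC] i /cw [ABw Csw]; rewrite /Cs'.
    by case: eqP => [i0|//]; rewrite i0 in ABw *.
  move=> cw; split => [i ilt|].
    by have := cw _ ilt; rewrite /Cs'; case: eqP => [-> [ABw _]|//]; rewrite C0.
  by have := cw _ nt_gt0; rewrite /Cs' eqxx => -[].
rewrite /cylinder (indep nt mABC') (indep nt mABC).
case: nt nt_gt0 => // n _.
by rewrite !big_ord_recl /= C0 preimage_setT probability_setT mule1 muleAC.
Qed.

Lemma h0free_cylinder_coord {i A B C} : (i < nt)%N ->
  measurable A -> measurable B -> measurable C -> (i = 0%N -> C = setT) ->
  h0free_cylinders (x i @^-1` A `&` y i @^-1` B `&` h i @^-1` C).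
Proof.
move=> ilt mA mB mC Ci0.
exists (fun j => if j == i then A else setT), (fun j => if j == i then B else setT),
  (fun j => if j == i then C else setT); split.
- by move=> j; case: eqP.
- by case: eqP => // i0; rewrite Ci0.
apply/seteqP; split => w /=.
  by move=> [[xA yB] hC] j _; case: eqP => [->|].
by move=> cw; have := cw i ilt; rewrite eqxx.
Qed.

Lemma interf_indep_h0 alpha beta fd A C : measurable A -> measurable C ->
  let I := interf x y h alpha beta fd nt in
  P (I @^-1` A `&` h 0 @^-1` C) = (P (I @^-1` A) * P (h 0 @^-1` C))%E.
Proof.
move=> mA mC I.
(* Instantiating measurable_interf at T equipped with the sigma-algebra
   generated by the h0-free cylinders shows that I is measurable for it. *)
pose TP := g_sigma_algebraType h0free_cylinders.
have mI : measurable_fun [set: TP] (I : TP -> R).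
  apply: measurable_interf => [i ilt|i ilt|i /andP[i0 ilt]] _ S mS; rewrite setTI.
  - have := h0free_cylinder_coord ilt mS measurableT measurableT (fun=> erefl).
    by rewrite !preimage_setT !setIT; exact: sub_sigma_algebra.
  - have := h0free_cylinder_coord ilt measurableT mS measurableT (fun=> erefl).
    by rewrite !preimage_setT setIT setTI; exact: sub_sigma_algebra.
  - have i_neq0 : i = 0%N -> S = setT by move=> i_eq0; rewrite i_eq0 in i0.
    have := h0free_cylinder_coord ilt measurableT measurableT mS i_neq0.
    by rewrite !preimage_setT !setTI; exact: sub_sigma_algebra.
apply: indep_sigma_generated.
- exact: h0free_cylinders_setI_closed.
- exact: h0free_cylinders_measurable.
- exact: measurable_preimageT.
- by move=> E; exact: h0free_cylinder_indep_h0.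
- by have := mI measurableT A mA; rewrite setTI.
Qed.

End cylinders.

Section sir_region.
Context {R : realType} (theta : R).

(* The pairs (t, s) with theta <= s / t, where s / 0 is read as +oo as in SIR. *)
Definition sir_region : set (R * R) := [set p | (p.1 == 0) ||
  ((0 < p.1) && (theta * p.1 <= p.2)) || ((p.1 < 0) && (p.2 <= theta * p.1))].

Lemma measurable_sir_region : measurable sir_region.
Proof.
have mtheta1 : measurable_fun setT (fun p : R * R => theta * p.1).
  by apply: measurable_funM => //; exact: measurable_cst.
have msir : measurable_fun setT (fun p : R * R => (p.1 == 0) ||
    ((0 < p.1) && (theta * p.1 <= p.2)) || ((p.1 < 0) && (p.2 <= theta * p.1))).
  apply: measurable_or; first apply: measurable_or.
  - by apply: measurable_fun_eqr => //; exact: measurable_cst.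
  - apply: measurable_and; last exact: measurable_fun_ler.
    by apply: measurable_fun_ltr => //; exact: measurable_cst.
  - apply: measurable_and; last exact: measurable_fun_ler.
    by apply: measurable_fun_ltr => //; exact: measurable_cst.
by have := msir measurableT [set true] I; rewrite setTI.
Qed.

Lemma prob_xsection_sir_region d (T : measurableType d) (P : probability T R)
    (H : T -> R) (a : R) :
  exp_mean1 P H -> 0 <= theta -> 0 <= a ->
  P (H @^-1` xsection sir_region a) = (expR (- (theta * a)))%:E.
Proof.
move=> expH theta0; rewrite le_eqVlt => /predU1P[<-|a0].
  have -> : xsection sir_region 0 = setT.
    by apply/seteqP; split => t // _; rewrite /xsection /= inE /sir_region /= eqxx.
  by rewrite preimage_setT probability_setT mulr0 oppr0 expR0.
have -> : xsection sir_region a = `[theta * a, +oo[%classic.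
  apply/seteqP; split => t; rewrite /xsection /= inE /sir_region /= in_itv /= andbT.
    by rewrite gt_eqF // a0 ltNge (ltW a0) /= orbF mulrC.
  by rewrite gt_eqF // a0 /= mulrC => ->.
by apply: exp_mean1_itvcy => //; rewrite mulr_ge0 // ltW.
Qed.

End sir_region.

Lemma SIR_ge_sir_region (R : realType) d (T : measurableType d)
    (x y : nat -> T -> R * R) (h : nat -> T -> R) alpha beta fd nt theta :
  [set w | theta%:E <= SIR x y h alpha beta fd nt w]%E =
  [set w | sir_region theta (interf x y h alpha beta fd nt w, h 0%N w)].
Proof.
apply/predeqP => w; rewrite /SIR /sir_region /=.
case: (ltgtP (interf x y h alpha beta fd nt w) 0) => [Ineg|Ipos|->] /=.
- by rewrite lee_fin ler_ndivlMr.
- by rewrite lee_fin ler_pdivlMr // orbF.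
- by rewrite leey.
Qed.

Section coverage.
Context (R : realType) d (T : measurableType d) (P : probability T R)
  (x y : nat -> T -> R * R) (h : nat -> T -> R).
Hypotheses (mx : forall i, measurable_fun setT (x i))
  (my : forall i, measurable_fun setT (y i))
  (mh : forall i, measurable_fun setT (h i))
  (hexp : forall i, exp_mean1 P (h i))
  (indep : indep_family P x y h).

Lemma interf_ae_ge0 alpha beta fd nt : 0 <= beta ->
  \forall w \ae P, 0 <= interf x y h alpha beta fd nt w.
Proof.
move=> beta0; apply: filterS (ae_foralln (fun k => exp_mean1_ae_ge0 (mh k) (hexp k))).
by move=> w; exact: interf_ge0.
Qed.

Lemma cover_probE alpha beta fd theta nt : (0 < nt)%N -> 0 <= theta -> 0 <= beta ->
  cover_prob P x y h alpha beta fd theta nt = laplace_I P x y h alpha beta fd theta nt.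
Proof.
move=> nt0 theta0 beta0; set I := interf x y h alpha beta fd nt.
have mI : measurable_fun setT I.
  by apply: measurable_interf => *; [exact: mx|exact: my|exact: mh].
rewrite /cover_prob SIR_ge_sir_region (prob_preimage_pair_indep mI (mh 0)); last 2 first.
- by move=> A C mA mC; exact: interf_indep_h0.
- exact: measurable_sir_region.
rewrite /laplace_I; apply: ae_eq_integral => //.
- exact: (measurableT_comp (measurable_prob_preimage_xsection P (mh 0)
    (measurable_sir_region theta)) mI).
- have mexp : measurable_fun setT (fun a : R => expR (- (theta * a))).
    apply: continuous_measurable_fun => a; apply: continuous_comp; last exact: continuous_expR.
    by apply: (@continuousN _ R^o); apply: continuousM => //; exact: cst_continuous.
  exact/measurable_EFinP/(measurableT_comp mexp mI).
- apply: filterS (interf_ae_ge0 alpha fd nt beta0) => w Iw0 _.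
  exact: prob_xsection_sir_region.
Qed.

End coverage.

Theorem theorem2
  (R : realType) (d : measure_display) (T : measurableType d)
  (P : probability T R)
  (Ups : nat -> R -> nat -> R) (gamma_r : R)
  (N m : nat) (theta Rd alpha beta : R)
  (x y : nat -> T -> R * R) (h : nat -> T -> R) :
  (2 <= N)%N -> (N <= m)%N -> 0 < theta ->
  0 < Rd -> 2 < alpha -> 0 <= beta <= 1 ->
  (forall k : nat, (1 <= k <= m)%N -> 0 <= Ups k gamma_r m) ->
  \sum_(k < m) Ups k.+1 gamma_r m = 1 ->
  (forall i, measurable_fun setT (x i)) ->
  (forall i, measurable_fun setT (y i)) ->
  (forall i, measurable_fun setT (h i)) ->
  (forall i, uniform_disk P Rd (x i)) ->
  (forall i, uniform_disk P Rd (y i)) ->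
  (forall i, exp_mean1 P (h i)) ->
  indep_family P x y h ->
  let rho := fun l : 'I_m => Ups (val l).+1 gamma_r m in
  success_prob P x y h alpha beta N rho theta =
  ((N%:R^-1 * P_hit N rho)%:E +
   \sum_(1 <= nt < N.+1)
     (((P_HDRX N rho)%:E * laplace_I P x y h alpha beta false theta nt +
       (P_FDTR N rho)%:E * laplace_I P x y h alpha beta true theta nt) *
      (binom_w N rho nt)%:E))%E.
Proof.
move=> _ _ theta0 _ _ /andP[beta0 _] _ rho1 mx my mh _ _ hexp indep rho.
rewrite /success_prob P_SR_add_SR_HDTX //; congr (_ + _)%E.
apply: eq_big_nat => nt /andP[nt0 _].
by rewrite !cover_probE // ?ltW // muleC.
Qed.
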